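(* If $L$ is a regular language, then ${\rm pssr}(L)$ is context-free.
   Context: For words $x=a_1\cdots a_n$, $y=b_1\cdots b_n$ of the same length, the perfect shuffle is $x\,\text{sh}\,y=a_1b_1a_2b_2\cdots a_nb_n$. $x^R$ denotes the reversal of $x$. For a language $L$, ${\rm pssr}(L)=\{x\,\text{sh}\,x^R : x\in L\}$. *)

From Stdlib Require Import Relations.Relation_Operators.
From mathcomp Require Import all_boot.
Set Implicit Arguments. Unset Strict Implicit. Unset Printing Implicit Defensive.

Definition language (Sigma : finType) := seq Sigma -> Prop.

(* Perfect shuffle  a1 b1 a2 b2 ... an bn  (intended for |x| = |y|). *)
Fixpoint pshuffle (T : Type) (x y : seq T) : seq T :=
  match x, y with
  | a :: x', b :: y' => a :: b :: pshuffle x' y'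
  | _, _ => [::]
  end.

Definition pssr (Sigma : finType) (L : language Sigma) : language Sigma :=
  fun w => exists x, L x /\ w = pshuffle x (rev x).

Record dfa (Sigma : finType) := DFA {
  dfa_state : finType;
  dfa_start : dfa_state;
  dfa_trans : dfa_state -> Sigma -> dfa_state;
  dfa_final : pred dfa_state }.

Definition dfa_accepts (Sigma : finType) (A : dfa Sigma) (w : seq Sigma) : bool :=
  @dfa_final Sigma A (foldl (@dfa_trans Sigma A) (@dfa_start Sigma A) w).

Definition regular (Sigma : finType) (L : language Sigma) : Prop :=
  exists A : dfa Sigma, forall w, L w <-> dfa_accepts A w.

Record cfg (Sigma : finType) := CFG {
  cfg_nt : finType;
  cfg_start : cfg_nt;
  cfg_rules : seq (cfg_nt * seq (cfg_nt + Sigma)) }.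

Inductive cfg_step (Sigma : finType) (G : cfg Sigma) :
    seq (cfg_nt G + Sigma) -> seq (cfg_nt G + Sigma) -> Prop :=
  | CfgStep (u v alpha : seq (cfg_nt G + Sigma)) (A : cfg_nt G) :
      (A, alpha) \in @cfg_rules Sigma G ->
      @cfg_step Sigma G (u ++ inl A :: v) (u ++ alpha ++ v).

Definition cfg_generates (Sigma : finType) (G : cfg Sigma) (w : seq Sigma) : Prop :=
  clos_refl_trans _ (@cfg_step Sigma G) [:: inl (@cfg_start Sigma G)] (map inr w).

Definition context_free (Sigma : finType) (L : language Sigma) : Prop :=
  exists G : cfg Sigma, forall w, L w <-> cfg_generates G w.

(* Fix a DFA A with transition function d recognising L.  For states p, q the
   set  { y sh y^R : d*(p, y) = q }  is generated by a nonterminal <p,q>: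
   writing y = a y' b we get  y sh y^R = a b (y' sh y'^R) b a  and
   d*(p, y) = d (d*(d p a, y')) b, so the productions
       S -> <s0,q>  (q final),   <p,p> -> eps,   <p, d p a> -> a a,
       <p, d r b> -> a b <d p a, r> b a
   suffice. *)

From Stdlib Require Import Relations.Relation_Operators.
From mathcomp Require Import all_boot.
Set Implicit Arguments. Unset Strict Implicit. Unset Printing Implicit Defensive.

Lemma seq_ends_ind (T : Type) (P : seq T -> Prop) :
  P [::] -> (forall a, P [:: a]) -> (forall a y b, P y -> P (a :: rcons y b)) ->
  forall y, P y.
Proof.
move=> P0 P1 Pab y; elim: {y}(size y) {-2}y (leqnn (size y)) => [|n IH] [|a y] //.
case/lastP: y => [|y b] //; rewrite /= size_rcons ltnS => /ltnW le_yn.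
exact/Pab/IH.
Qed.

Lemma pshuffle_rcons (T : Type) (x y : seq T) a b : size x = size y ->
  pshuffle (rcons x a) (rcons y b) = pshuffle x y ++ [:: a; b].
Proof. by elim: x y => [|c x IH] [|e y] //= [] /IH ->. Qed.

Lemma pshuffle_rev_ends (T : Type) (y : seq T) a b :
  pshuffle (a :: rcons y b) (rev (a :: rcons y b)) =
  [:: a; b] ++ pshuffle y (rev y) ++ [:: b; a].
Proof. by rewrite rev_cons rev_rcons /= pshuffle_rcons ?size_rev. Qed.

Lemma map_inr_no_inl (X Y : Type) (w : seq Y) (u v : seq (X + Y)) (A : X) :
  map inr w <> u ++ inl A :: v.
Proof. by elim: w u => [|b w IH] [|c u] //= [] _ /IH. Qed.

Lemma single_nt_split (X Y : Type) (u v : seq Y) (u0 v0 : seq (X + Y)) (A B : X) :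
  u0 ++ inl A :: v0 = map inr u ++ inl B :: map inr v ->
  [/\ u0 = map inr u, A = B & v0 = map inr v].
Proof.
elim: u u0 => [|b u IH] [|c u0] //= [].
- by move=> -> ->.
- by move=> _ E; case: (map_inr_no_inl (esym E)).
- by move=> -> /IH [-> -> ->].
Qed.

Lemma rt_invariant (T : Type) (R : T -> T -> Prop) (P : T -> Prop) :
  (forall x y, P x -> R x y -> P y) ->
  forall x y, clos_refl_trans T R x y -> P x -> P y.
Proof. by move=> stepP x y; elim=> [? ? /stepP|//|? ? ? _ IH1 _ IH2 /IH1/IH2]. Qed.

Section PssrGrammar.

Variable Sigma : finType.
Variable A : dfa Sigma.
Variable L : language Sigma.
Hypothesis L_A : forall w, L w <-> dfa_accepts A w.

Notation state := (dfa_state A).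
Notation d := (@dfa_trans Sigma A).
Notation s0 := (dfa_start A).
Notation final := (@dfa_final Sigma A).

Definition run (p : state) (y : seq Sigma) : state := foldl d p y.

Lemma run_ends p a y b : run p (a :: rcons y b) = d (run (d p a) y) b.
Proof. by rewrite /run /= foldl_rcons. Qed.

(* Nonterminals: the start symbol None and the pairs <p,q> = Some (p, q). *)
Definition nt : finType := option (state * state).

Notation form := (seq (nt + Sigma)).

Inductive is_rule : nt -> form -> Prop :=
  | RuleStart q : final q -> is_rule None [:: inl (Some (s0, q))]
  | RuleEmpty p : is_rule (Some (p, p)) [::]
  | RuleSingle p a : is_rule (Some (p, d p a)) [:: inr a; inr a]
  | RuleWrap p a b r : is_rule (Some (p, d r b))
      [:: inr a; inr b; inl (Some (d p a, r)); inr b; inr a].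

Definition rules : seq (nt * form) :=
  [seq (None, [:: inl (Some (s0, q))]) | q <- enum state & final q] ++
  [seq (Some (p, p), [::]) | p <- enum state] ++
  [seq (Some (t.1, d t.1 t.2), [:: inr t.2; inr t.2]) | t <- enum {: state * Sigma}] ++
  [seq (Some (t.1.1.1, d t.2 t.1.2),
        [:: inr t.1.1.2; inr t.1.2; inl (Some (d t.1.1.1 t.1.1.2, t.2));
            inr t.1.2; inr t.1.1.2]) | t <- enum {: state * Sigma * Sigma * state}].

Lemma rulesP X alpha : (X, alpha) \in rules <-> is_rule X alpha.
Proof.
rewrite !mem_cat; split.
- case/or4P=> /mapP [t t_in [-> ->]]; try constructor.
  by move: t_in; rewrite mem_filter => /andP [].
- case=> [q fin_q|p|p a|p a b r]; apply/or4P.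
  + by constructor 1; apply/mapP; exists q; rewrite // mem_filter /= fin_q mem_enum.
  + by constructor 2; apply/mapP; exists p; rewrite ?mem_enum.
  + by constructor 3; apply/mapP; exists (p, a); rewrite ?mem_enum.
  + by constructor 4; apply/mapP; exists (p, a, b, r); rewrite ?mem_enum.
Qed.

Definition grammar : cfg Sigma := CFG None rules.

Notation derives := (clos_refl_trans _ (@cfg_step Sigma grammar)).

Lemma derive_rule u v X alpha :
  is_rule X alpha -> derives (u ++ inl X :: v) (u ++ alpha ++ v).
Proof. by move/rulesP=> r; apply/rt_step/CfgStep. Qed.

Lemma derive_pair y : forall p u v,
  derives (u ++ inl (Some (p, run p y)) :: v) (u ++ map inr (pshuffle y (rev y)) ++ v).
Proof.
elim/seq_ends_ind: y => [|a|a y b IH] p u v.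
- exact/derive_rule/RuleEmpty.
- exact/derive_rule/RuleSingle.
- rewrite run_ends pshuffle_rev_ends; apply: rt_trans.
    exact/derive_rule/(RuleWrap p a b).
  have := IH (d p a) (u ++ [:: inr a; inr b]) ([:: inr b; inr a] ++ v).
  by rewrite !map_cat -!catA /=.
Qed.

(* Every word of pssr L is generated: S -> <s0, run s0 x> ->* x sh x^R. *)
Lemma grammar_complete x : L x -> cfg_generates grammar (pshuffle x (rev x)).
Proof.
move/L_A=> acc_x; apply: rt_trans (derive_rule [::] [::] (RuleStart acc_x)) _.
by have := derive_pair x s0 [::] [::]; rewrite /= !cats0.
Qed.

Definition hole_ok (u v : seq Sigma) (p q : state) : Prop :=
  forall y, run p y = q -> pssr L (u ++ pshuffle y (rev y) ++ v).

Lemma hole_ok_start q : final q -> hole_ok [::] [::] s0 q.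
Proof.
move=> fin_q y run_y; exists y; rewrite cats0; split=> //.
by apply/L_A; rewrite /dfa_accepts -/(run s0 y) run_y.
Qed.

Lemma hole_ok_wrap u v p a b r :
  hole_ok u v p (d r b) -> hole_ok (u ++ [:: a; b]) ([:: b; a] ++ v) (d p a) r.
Proof.
move=> ok y run_y; have := ok (a :: rcons y b).
by rewrite run_ends run_y pshuffle_rev_ends -!catA => /(_ erefl).
Qed.

(* The invariant of the sentential forms derivable from the start symbol. *)
Inductive sound_form : form -> Prop :=
  | SoundStart : sound_form [:: inl None]
  | SoundHole u v p q : hole_ok u v p q ->
      sound_form (map inr u ++ inl (Some (p, q)) :: map inr v)
  | SoundWord w : pssr L w -> sound_form (map inr w).

Lemma sound_form_nt u0 v0 X : sound_form (u0 ++ inl X :: v0) ->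
  [/\ X = None, u0 = [::] & v0 = [::]] \/
  exists u v p q, [/\ X = Some (p, q), u0 = map inr u, v0 = map inr v & hole_ok u v p q].
Proof.
move E: (u0 ++ _) => f sf; case: sf E => [|u v p q ok|w _] E.
- by left; case: u0 E => [|? [|? ?]] // [-> ->].
- by right; have [-> -> ->] := single_nt_split E; exists u, v, p, q.
- by case: (map_inr_no_inl (esym E)).
Qed.

Lemma sound_step f g : sound_form f -> @cfg_step Sigma grammar f g -> sound_form g.
Proof.
move=> sf step; case: step sf => u0 v0 alpha X /rulesP rule; move: rule.
case=> [q fin_q|p|p a|p a b r] /sound_form_nt [[_ -> ->]|[u [v [p' [q' [pq -> -> ok]]]]]] //.
- exact: (SoundHole (hole_ok_start fin_q)).
- case: pq ok => <- <- ok.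
  by have := SoundWord (ok [::] erefl); rewrite !map_cat.
- case: pq ok => <- <- ok.
  by have := SoundWord (ok [:: a] erefl); rewrite !map_cat.
- case: pq ok => <- <- /(hole_ok_wrap (a := a)) ok.
  by have := SoundHole ok; rewrite !map_cat -!catA.
Qed.

Lemma grammar_sound w : cfg_generates grammar w -> pssr L w.
Proof.
move/(rt_invariant sound_step)/(_ SoundStart).
move E: (map inr w) => f sf; case: sf E => [|u v p q _|w' Lw'] E.
- by case: w E.
- by case: (map_inr_no_inl E).
- have inj_inr : injective (@inr nt Sigma) by move=> ? ? [].
  by rewrite -(inj_map inj_inr E) in Lw'.
Qed.

End PssrGrammar.

Theorem mainTheorem8 (Sigma : finType) (L : language Sigma) :
  regular L -> context_free (pssr L).
Proof.
move=> [A L_A]; exists (grammar A) => w; split.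
- by case=> x [Lx ->]; apply: grammar_complete.
- exact: grammar_sound.
Qed.
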